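(* Let $N=n+k$. The Bethe ansatz equations $$(-1)^n\frac{\Pi(y)}{(1+\beta y_i)^n}\prod_{j=1}^N y_i\ominus t_j+q=0,\qquad i=1,\dots,n,$$ for $y=(y_1,\dots,y_n)$ have $\binom{N}{n}$ pairwise distinct solutions $y_\lambda=(y_{\lambda_n+1},\dots,y_{\lambda_2+n-1},y_{\lambda_1+n})$, $\lambda\subset(k^n)$, whose components are formal power series in $q$ with coefficients rational functions of $t_1,\dots,t_N$ and $\beta$, and, for $i\in I_\lambda$, up to first order in $q$, $$y_i=t_i+q\,(-1)^{n-1}\frac{(1+\beta t_i)^{n+1}}{\Pi(t_\lambda)\prod_{j\neq i}t_i\ominus t_j}+O(q^2),$$ the product running over $j\in\{1,\dots,N\}\setminus\{i\}$.
   Context: $\beta$ indeterminate, $x\ominus y=(x-y)/(1+\beta y)$, $\Pi(y)=\prod_{i=1}^n(1+\beta y_i)$. For $\lambda\subset(k^n)$ (at most $n$ parts, each $\le k$), $I_\lambda=\{\lambda_{n+1-i}+i:1\le i\le n\}$ and $t_\lambda=(t_i)_{i\in I_\lambda}$, $\Pi(t_\lambda)=\prod_{i\in I_\lambda}(1+\beta t_i)$. *)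

From HB Require Import structures.
From mathcomp Require Import all_boot all_order all_algebra.
From mathcomp Require Import fraction.
From mathcomp Require Import mpoly.
Set Implicit Arguments. Unset Strict Implicit. Unset Printing Implicit Defensive.
Import Order.TTheory GRing.Theory Num.Theory.
Local Open Scope ring_scope.

(* Variables 'X_0 .. 'X_(N-1) are t_1 .. t_N, variable 'X_N is beta.   *)
Definition RatFun (N : nat) := {fraction {mpoly rat[N.+1]}}.

Definition beta (N : nat) : RatFun N := tofrac ('X_(@ord_max N) : {mpoly rat[N.+1]}).

(* t_j for j = 1..N (1-indexed, as in the paper). *)
Definition tvar (N : nat) (j : nat) : RatFun N :=
  tofrac ('X_(@inord N j.-1) : {mpoly rat[N.+1]}).

Definition ps (K : fieldType) := nat -> K.

Section PS.
Variable K : fieldType.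

Definition ps_const (c : K) : ps K := fun m => if m == 0%N then c else 0.
Definition ps_one : ps K := ps_const 1.
Definition ps_q : ps K := fun m => if m == 1%N then 1 else 0.
Definition ps_add (f g : ps K) : ps K := fun m => f m + g m.
Definition ps_scale (c : K) (f : ps K) : ps K := fun m => c * f m.
Definition ps_mul (f g : ps K) : ps K :=
  fun m => \sum_(i < m.+1) f i * g (m - i)%N.
Definition ps_exp (f : ps K) (e : nat) : ps K := iter e (ps_mul f) ps_one.

(* Multiplicative inverse of a series (meaningful when f 0 != 0):
   g 0 = (f 0)^-1,  g m = - (f 0)^-1 * \sum_(i < m) f (m - i) * g i. *)
Fixpoint ps_inv_seq (f : ps K) (m : nat) : seq K :=
  match m with
  | 0 => [:: (f 0%N)^-1]
  | m'.+1 => let s := ps_inv_seq f m' in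
             rcons s (- (f 0%N)^-1 * \sum_(i < m'.+1) f (m'.+1 - i)%N * nth 0 s i)
  end.
Definition ps_inv (f : ps K) : ps K := fun m => nth 0 (ps_inv_seq f m) m.

End PS.

Definition ps_ominus N (x : ps (RatFun N)) (c : RatFun N) : ps (RatFun N) :=
  fun m => (x m - ps_const c m) / (1 + beta N * c).

Definition ominus N (x y : RatFun N) : RatFun N := (x - y) / (1 + beta N * y).

(* Partitions lambda inside the n x k box: lambda_1 >= ... >= lambda_n, *)
(* each in 0..k, stored as a tuple (tnth l (i-1) = lambda_i).           *)
Definition lam_pred (n k : nat) : pred (n.-tuple 'I_k.+1) :=
  fun l => sorted (fun a b : 'I_k.+1 => (b <= a)%N) l.
Notation Lam n k := (sig (fun x : n.-tuple _ => is_true (@lam_pred n k x))) (only parsing).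

(* The index attached to position p (0-indexed, p = i - 1) of y_lambda:
   lambda_{n+1-i} + i, an element of I_lambda. *)
Definition Iidx (n k : nat) (l : Lam n k) (p : 'I_n) : nat :=
  (tnth (val l) (rev_ord p) + p.+1)%N.

Definition PiY N n (y : 'I_n -> ps (RatFun N)) : ps (RatFun N) :=
  \big[@ps_mul _/ps_one _]_(i < n)
     ps_add (ps_one _) (ps_scale (beta N) (y i)).

Definition BAE_lhs N n (y : 'I_n -> ps (RatFun N)) (i : 'I_n) : ps (RatFun N) :=
  ps_add
    (ps_scale ((-1) ^+ n)
       (ps_mul (ps_mul (PiY y)
                       (ps_inv (ps_exp (ps_add (ps_one _) (ps_scale (beta N) (y i))) n)))
               (\big[@ps_mul _/ps_one _]_(j < N) ps_ominus (y i) (tvar N j.+1))))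
    (ps_q _).

Definition PiT n k (l : Lam n k) : RatFun (n + k) :=
  \prod_(p < n) (1 + beta (n + k) * tvar (n + k) (Iidx l p)).

Definition first_coef n k (l : Lam n k) (a : nat) : RatFun (n + k) :=
  (-1) ^+ n.-1 * (1 + beta (n + k) * tvar (n + k) a) ^+ n.+1 /
  (PiT l * \prod_(j < n + k | j.+1 != a)
             ominus (tvar (n + k) a) (tvar (n + k) j.+1)).

From HB Require Import structures.
From mathcomp Require Import all_boot all_order all_algebra.
From mathcomp Require Import fraction.
From mathcomp Require Import mpoly.
From mathcomp Require Import ring.
From Stdlib Require Import FunctionalExtensionality.
Set Implicit Arguments. Unset Strict Implicit. Unset Printing Implicit Defensive.
Import Order.TTheory GRing.Theory Num.Theory.
Local Open Scope ring_scope.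

(* The i-th equation factors as (-1)^n H_i(y) (y_i (-) t_a) + q with a the
   i-th element of I_lambda, and H_i(t_lambda) != 0 because the t_j are
   distinct.  Hence, once y is known modulo q^(m+1), the coefficient of q^(m+1)
   in the i-th equation is c_i y_i[m+1] plus terms already known, with
   c_i = (-1)^n H_i(t_lambda) / (1 + beta t_a) != 0: the coefficients of the
   solution are determined one order at a time (Hensel lifting), starting from
   y = t_lambda.  Distinct lambda give distinct constant terms t_lambda. *)

Section PowerSeries.
Variable K : fieldType.
Implicit Types f g d : ps K.

Definition ps_equpto (m : nat) f g := forall j, (j <= m)%N -> f j = g j.

Definition ps_trunc (m : nat) f : {poly K} := \poly_(i < m.+1) f i.

Lemma coef_ps_trunc m f j : (j <= m)%N -> (ps_trunc m f)`_j = f j.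
Proof. by move=> le_jm; rewrite coef_poly ltnS le_jm. Qed.

Lemma ps_mul_coef_trunc m f g j :
  (j <= m)%N -> ps_mul f g j = (ps_trunc m f * ps_trunc m g)`_j.
Proof.
move=> le_jm; rewrite coefM; apply: eq_bigr => i _.
have le_im : (i <= m)%N by rewrite -ltnS (leq_trans (ltn_ord i)).
by rewrite !coef_ps_trunc // (leq_trans (leq_subr _ _) le_jm).
Qed.

Lemma coefM_upto m (p p' r r' : {poly K}) :
  (forall j, (j <= m)%N -> p`_j = p'`_j) ->
  (forall j, (j <= m)%N -> r`_j = r'`_j) -> (p * r)`_m = (p' * r')`_m.
Proof.
move=> eq_p eq_r; rewrite !coefM; apply: eq_bigr => i _.
by rewrite eq_p ?eq_r ?leq_subr // -ltnS.
Qed.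

Lemma ps_mulA : associative (@ps_mul K).
Proof.
move=> f g h; apply: functional_extensionality => m.
rewrite (ps_mul_coef_trunc f _ (leqnn m)) (ps_mul_coef_trunc _ h (leqnn m)).
rewrite (@coefM_upto m _ (ps_trunc m f) _ (ps_trunc m g * ps_trunc m h)) //;
  last by move=> j le_jm; rewrite coef_ps_trunc // (ps_mul_coef_trunc _ _ le_jm).
rewrite mulrA; apply: coefM_upto => // j le_jm.
by rewrite coef_ps_trunc // (ps_mul_coef_trunc _ _ le_jm).
Qed.

Lemma ps_mulC : commutative (@ps_mul K).
Proof.
move=> f g; apply: functional_extensionality => m.
by rewrite !(ps_mul_coef_trunc _ _ (leqnn m)) mulrC.
Qed.

Lemma ps_mul1 : left_id (ps_one K) (@ps_mul K).
Proof.
move=> f; apply: functional_extensionality => m.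
rewrite /ps_mul big_ord_recl /ps_one /ps_const /= mul1r subn0 big1 ?addr0 //.
by move=> i _; rewrite mul0r.
Qed.

HB.instance Definition _ := Monoid.isComLaw.Build (ps K) (ps_one K) (@ps_mul K)
  ps_mulA ps_mulC ps_mul1.

Lemma ps_mul_coef0 f g : ps_mul f g 0 = f 0%N * g 0%N.
Proof. by rewrite /ps_mul big_ord1 subn0. Qed.

Lemma ps_prod_coef0 (I : Type) (r : seq I) (P : pred I) (F : I -> ps K) :
  (\big[@ps_mul K/ps_one K]_(i <- r | P i) F i) 0%N = \prod_(i <- r | P i) F i 0%N.
Proof. exact: (big_morph (fun f : ps K => f 0%N) ps_mul_coef0). Qed.

Lemma ps_exp_coef0 f e : ps_exp f e 0%N = f 0%N ^+ e.
Proof. by elim: e => [|e IHe] //=; rewrite ps_mul_coef0 -/(ps_exp f e) IHe exprS. Qed.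

Lemma ps_equpto_le m m' f g : (m' <= m)%N -> ps_equpto m f g -> ps_equpto m' f g.
Proof. by move=> le_m'm eq_fg j le_jm'; apply: eq_fg; exact: leq_trans le_jm' le_m'm. Qed.

Lemma ps_equpto_mul m f f' g g' :
  ps_equpto m f f' -> ps_equpto m g g' -> ps_equpto m (ps_mul f g) (ps_mul f' g').
Proof.
move=> eq_f eq_g j le_jm; apply: eq_bigr => i _.
have le_im : (i <= m)%N by rewrite (leq_trans _ le_jm) // -ltnS.
by rewrite eq_f // eq_g // (leq_trans (leq_subr _ _) le_jm).
Qed.

Lemma ps_equpto_add m f f' g g' :
  ps_equpto m f f' -> ps_equpto m g g' -> ps_equpto m (ps_add f g) (ps_add f' g').
Proof. by move=> eq_f eq_g j le_jm; rewrite /ps_add eq_f ?eq_g. Qed.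

Lemma ps_equpto_scale m c f f' :
  ps_equpto m f f' -> ps_equpto m (ps_scale c f) (ps_scale c f').
Proof. by move=> eq_f j le_jm; rewrite /ps_scale eq_f. Qed.

Lemma ps_equpto_exp m f f' e :
  ps_equpto m f f' -> ps_equpto m (ps_exp f e) (ps_exp f' e).
Proof. by move=> eq_f; elim: e => [|e IHe] //=; exact: ps_equpto_mul. Qed.

Lemma ps_inv_seq_upto m f f' : ps_equpto m f f' -> ps_inv_seq f m = ps_inv_seq f' m.
Proof.
elim: m => [|m IHm] eq_f /=; first by rewrite eq_f.
rewrite IHm; last exact: ps_equpto_le (leqnSn m) eq_f.
congr (rcons _ (_ * _)); first by rewrite eq_f.
by apply: eq_bigr => i _; rewrite eq_f // leq_subr.
Qed.

Lemma ps_equpto_inv m f f' : ps_equpto m f f' -> ps_equpto m (ps_inv f) (ps_inv f').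
Proof.
move=> eq_f j le_jm; rewrite /ps_inv (@ps_inv_seq_upto j f f') //.
exact: ps_equpto_le le_jm eq_f.
Qed.

Lemma ps_equpto_prod m (I : Type) (r : seq I) (P : pred I) (F F' : I -> ps K) :
  (forall i, P i -> ps_equpto m (F i) (F' i)) ->
  ps_equpto m (\big[@ps_mul K/ps_one K]_(i <- r | P i) F i)
              (\big[@ps_mul K/ps_one K]_(i <- r | P i) F' i).
Proof. by move=> eq_F; apply: (big_ind2 (ps_equpto m)) => // *; exact: ps_equpto_mul. Qed.

(* When d has no constant term, the top coefficient of g d only sees g below
   order m + 1; this is the linearisation behind the lifting step. *)
Lemma ps_mul_coefS_sub m g g' d d' :
  ps_equpto m g g' -> ps_equpto m d d' -> d 0%N = 0 -> d' 0%N = 0 ->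
  ps_mul g d m.+1 - ps_mul g' d' m.+1 = g 0%N * (d m.+1 - d' m.+1).
Proof.
move=> eq_g eq_d d0 d'0.
have split_top (G D : ps K) : ps_mul G D m.+1 =
    G 0%N * D m.+1 + \sum_(i < m) G i.+1 * D (m - i)%N + G m.+1 * D 0%N.
  by rewrite /ps_mul big_ord_recr /= subnn big_ord_recl /= subn0.
rewrite !split_top d0 d'0 !mulr0 !addr0 eq_g //.
have -> : \sum_(i < m) g i.+1 * d (m - i)%N = \sum_(i < m) g' i.+1 * d' (m - i)%N.
  by apply: eq_bigr => i _; rewrite eq_g ?eq_d ?leq_subr ?ltn_ord.
by rewrite opprD addrACA subrr addr0 -mulrBr.
Qed.

End PowerSeries.

Section Variables.
Variable N : nat.

Lemma one_beta_tvar_neq0 j : 1 + beta N * tvar N j != 0.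
Proof.
rewrite /beta /tvar -tofracM -tofrac1 -tofracD tofrac_eq0.
apply/eqP => /(congr1 (meval (fun _ => 0 : rat))).
by rewrite mevalD mevalM !mevalXU meval1 meval0 mulr0 addr0 => /eqP; rewrite oner_eq0.
Qed.

Lemma tvar_inj a b : (0 < a <= N)%N -> (0 < b <= N)%N -> tvar N a = tvar N b -> a = b.
Proof.
move=> /andP[a_gt0 le_aN] /andP[b_gt0 le_bN] /eqP; rewrite /tvar tofrac_eq => /eqP eq_X.
have inord_pred c : (0 < c <= N)%N -> nat_of_ord (@inord N c.-1) = c.-1.
  by case/andP=> c_gt0 le_cN; rewrite inordK // ltnS (leq_trans (leq_pred _) le_cN).
have eq_ord : @inord N a.-1 = @inord N b.-1.
  have [// | ne_ord] := eqVneq (@inord N a.-1) (@inord N b.-1).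
  pose v (i : 'I_N.+1) : rat := if i == @inord N a.-1 then 1 else 0.
  move: (congr1 (meval v) eq_X); rewrite !mevalXU /v eqxx eq_sym (negbTE ne_ord).
  by move/eqP; rewrite oner_eq0.
move: (congr1 val eq_ord); rewrite /= !inord_pred ?a_gt0 ?b_gt0 // => eq_pred.
by rewrite -(prednK a_gt0) -(prednK b_gt0) eq_pred.
Qed.

Lemma ominus_tvar_neq0 a b : (0 < a <= N)%N -> (0 < b <= N)%N -> a != b ->
  ominus (tvar N a) (tvar N b) != 0.
Proof.
move=> a_range b_range ne_ab; rewrite /ominus mulf_neq0 ?invr_eq0 ?one_beta_tvar_neq0 //.
by rewrite subr_eq0; apply: contra ne_ab => /eqP /(tvar_inj a_range b_range) ->.
Qed.

Lemma ps_equpto_ominus m (x x' : ps (RatFun N)) c :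
  ps_equpto m x x' -> ps_equpto m (ps_ominus x c) (ps_ominus x' c).
Proof. by move=> eq_x j le_jm; rewrite /ps_ominus eq_x. Qed.

End Variables.

Lemma signed_ratio_inv (F : fieldType) (e : nat) (u P Q : F) :
  (0 < e)%N -> u != 0 -> P != 0 -> Q != 0 ->
  (-1) ^+ e.-1 * u ^+ e.+1 / (P * Q) = - ((-1) ^+ e * (P * (u ^+ e)^-1 * Q) / u)^-1.
Proof.
case: e => // e _ u_neq0 P_neq0 Q_neq0; rewrite /= -invr_sign !exprS.
have ratio_inv (s w : F) : s != 0 -> w != 0 ->
    s^-1 * (u * (u * w)) / (P * Q) = - (-1 * s * (P / (u * w) * Q) / u)^-1.
  move=> s_neq0 w_neq0.
  by field; rewrite u_neq0 P_neq0 Q_neq0 s_neq0 w_neq0 oppr_eq0 oner_eq0.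
by rewrite ratio_inv ?signr_eq0 ?expf_neq0.
Qed.

Section BetheSolution.
Variables (n k : nat) (l : Lam n k).
Local Notation N := (n + k).
Local Notation K := (RatFun (n + k)).

Definition idx (p : 'I_n) : nat := Iidx l p.

Lemma idx_range p : (0 < idx p <= N)%N.
Proof. by rewrite /idx /Iidx addnS ltn0Sn /= addnC -addSn leq_add // -ltnS ltn_ord. Qed.

Lemma idx_pred_lt p : ((idx p).-1 < N)%N.
Proof. by case/andP: (idx_range p) => idx_gt0 le_idx; rewrite prednK. Qed.

Definition idx_ord p : 'I_N := Ordinal (idx_pred_lt p).

Lemma idx_ordS p : (idx_ord p).+1 = idx p.
Proof. by rewrite /= prednK //; case/andP: (idx_range p). Qed.

Definition tl p : K := tvar N (idx p).

Definition cofactor (y : 'I_n -> ps K) (i : 'I_n) : ps K :=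
  ps_mul (ps_mul (PiY y)
           (ps_inv (ps_exp (ps_add (ps_one _) (ps_scale (beta N) (y i))) n)))
    (\big[@ps_mul _/ps_one _]_(j < N | j != idx_ord i) ps_ominus (y i) (tvar N j.+1)).

Lemma BAE_lhsE (y : 'I_n -> ps K) (i : 'I_n) : BAE_lhs y i =
  ps_add (ps_scale ((-1) ^+ n) (ps_mul (cofactor y i) (ps_ominus (y i) (tl i)))) (ps_q _).
Proof.
rewrite /BAE_lhs (bigD1 (idx_ord i)) //= idx_ordS.
by rewrite (ps_mulC (ps_ominus _ _)) ps_mulA.
Qed.

Lemma ps_equpto_cofactor m (y y' : 'I_n -> ps K) (i : 'I_n) :
  (forall p, ps_equpto m (y p) (y' p)) ->
  ps_equpto m (cofactor y i) (cofactor y' i).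
Proof.
move=> eq_y; have eq_one_beta p :
    ps_equpto m (ps_add (ps_one K) (ps_scale (beta N) (y p)))
                (ps_add (ps_one K) (ps_scale (beta N) (y' p))).
  by apply: ps_equpto_add => //; exact: ps_equpto_scale.
apply: ps_equpto_mul; last by apply: ps_equpto_prod => j _; exact: ps_equpto_ominus.
apply: ps_equpto_mul; first by apply: ps_equpto_prod.
by apply/ps_equpto_inv/ps_equpto_exp.
Qed.

Lemma ps_equpto_BAE_lhs m (y y' : 'I_n -> ps K) (i : 'I_n) :
  (forall p, ps_equpto m (y p) (y' p)) ->
  ps_equpto m (BAE_lhs y i) (BAE_lhs y' i).
Proof.
move=> eq_y; rewrite !BAE_lhsE; apply: ps_equpto_add => //; apply: ps_equpto_scale.
by apply: ps_equpto_mul; [exact: ps_equpto_cofactor | exact: ps_equpto_ominus].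
Qed.

Definition cofactor0 i : K := PiT l * ((1 + beta N * tl i) ^+ n)^-1 *
  \prod_(j < N | j != idx_ord i) ominus (tl i) (tvar N j.+1).

Lemma cofactor_coef0 (y : 'I_n -> ps K) (i : 'I_n) :
  (forall p, y p 0%N = tl p) -> cofactor y i 0%N = cofactor0 i.
Proof.
move=> y0; rewrite /cofactor !ps_mul_coef0 /ps_inv /= ps_exp_coef0 /PiY !ps_prod_coef0.
rewrite /cofactor0 /PiT /ps_add /ps_scale y0; congr (_ * _ * _).
- by apply: eq_bigr => p _; rewrite /ps_add /ps_scale y0.
- by apply: eq_bigr => j _; rewrite /ps_ominus /ominus y0.
Qed.

Lemma PiT_neq0 : PiT l != 0.
Proof. by apply/prodf_neq0 => p _; exact: one_beta_tvar_neq0. Qed.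

Lemma ominus_prod_neq0 i :
  \prod_(j < N | j != idx_ord i) ominus (tl i) (tvar N j.+1) != 0.
Proof.
apply/prodf_neq0 => j ne_j; apply: ominus_tvar_neq0; first exact: idx_range.
  by rewrite ltn0Sn ltn_ord.
by rewrite -idx_ordS eq_sym eqSS.
Qed.

Lemma cofactor0_neq0 i : cofactor0 i != 0.
Proof.
apply: mulf_neq0 (ominus_prod_neq0 i); apply: mulf_neq0 PiT_neq0 _.
by rewrite invr_eq0 expf_neq0 ?one_beta_tvar_neq0.
Qed.

Definition slope i : K := (-1) ^+ n * cofactor0 i / (1 + beta N * tl i).

Lemma slope_neq0 i : slope i != 0.
Proof.
apply: mulf_neq0; last by rewrite invr_eq0 one_beta_tvar_neq0.
by apply: mulf_neq0 (cofactor0_neq0 i); rewrite signr_eq0.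
Qed.

Lemma BAE_lhs_coefS_sub m (y y' : 'I_n -> ps K) (i : 'I_n) :
  (forall p, ps_equpto m (y p) (y' p)) ->
  (forall p, y p 0%N = tl p) -> (forall p, y' p 0%N = tl p) ->
  BAE_lhs y i m.+1 - BAE_lhs y' i m.+1 = slope i * (y i m.+1 - y' i m.+1).
Proof.
move=> eq_y y0 y'0; rewrite !BAE_lhsE /ps_add /ps_scale.
rewrite opprD addrACA subrr addr0 -mulrBr ps_mul_coefS_sub.
- by rewrite cofactor_coef0 // /ps_ominus /ps_const /slope !subr0; ring.
- exact: ps_equpto_cofactor.
- exact: ps_equpto_ominus.
- by rewrite /ps_ominus y0 /ps_const subrr mul0r.
- by rewrite /ps_ominus y'0 /ps_const subrr mul0r.
Qed.

Lemma BAE_lhs_coef0 (y : 'I_n -> ps K) (i : 'I_n) : y i 0%N = tl i -> BAE_lhs y i 0%N = 0.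
Proof.
move=> y0; rewrite BAE_lhsE /ps_add /ps_scale ps_mul_coef0 /ps_ominus y0 /ps_const.
by rewrite subrr mul0r !mulr0 addr0.
Qed.

(* [approx m] is exact modulo q^(m+1); the step corrects coefficient m + 1 by a
   Newton update with the slope. *)
Fixpoint approx (m : nat) : 'I_n -> ps K :=
  if m is m'.+1 then fun p j =>
    if j == m then approx m' p j - @BAE_lhs N n (approx m') p j / slope p
    else approx m' p j
  else fun p => ps_const (tl p).

Definition bethe_sol : 'I_n -> ps K := fun p j => approx j p j.

Lemma approx_coef0 m p : approx m p 0%N = tl p.
Proof. by elim: m p => [|m IHm] p //=. Qed.

Lemma approxS_upto m p : ps_equpto m (approx m p) (approx m.+1 p).
Proof. by move=> j le_jm /=; rewrite ltn_eqF. Qed.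

Lemma approx_solves m p : BAE_lhs (approx m.+1) p m.+1 = 0.
Proof.
have := BAE_lhs_coefS_sub p (@approxS_upto m) (@approx_coef0 m) (@approx_coef0 m.+1).
rewrite [approx m.+1 p m.+1]/= eqxx subKr mulrC divfK ?slope_neq0 //.
by move/eqP; rewrite -subr_eq0 addrC addKr oppr_eq0 => /eqP.
Qed.

Lemma bethe_sol_upto m p : ps_equpto m (bethe_sol p) (approx m p).
Proof.
move=> j; rewrite /bethe_sol; elim: m => [|m IHm]; first by rewrite leqn0 => /eqP ->.
rewrite leq_eqVlt => /orP[/eqP -> // | lt_jm].
by rewrite IHm // (@approxS_upto m p j lt_jm).
Qed.

Lemma bethe_sol_solves i m : BAE_lhs bethe_sol i m = 0.
Proof.
rewrite (@ps_equpto_BAE_lhs m _ (approx m)) //; last exact: bethe_sol_upto.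
by case: m => [|m]; [apply: BAE_lhs_coef0; rewrite approx_coef0 | exact: approx_solves].
Qed.

Lemma bethe_sol_coef0 p : bethe_sol p 0%N = tl p.
Proof. exact: approx_coef0. Qed.

Lemma first_coefE p : first_coef l (idx p) = - (slope p)^-1.
Proof.
have n_gt0 : (0 < n)%N by case: n p => [[]|].
rewrite /first_coef (eq_bigl (fun j : 'I_N => j != idx_ord p)); last first.
  by move=> j; rewrite -idx_ordS eqSS.
rewrite /slope /cofactor0; apply: signed_ratio_inv => //.
- exact: one_beta_tvar_neq0.
- exact: PiT_neq0.
- exact: ominus_prod_neq0.
Qed.

Lemma bethe_sol_coef1 p : bethe_sol p 1%N = first_coef l (idx p).
Proof.
rewrite first_coefE /bethe_sol /= BAE_lhsE /ps_add /ps_scale /ps_const /ps_q /=.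
rewrite [ps_mul _ _ 1%N]big1 ?mulr0 ?add0r ?mulNr ?mul1r //.
by move=> j _; rewrite /ps_ominus /ps_const subrr mul0r mulr0.
Qed.

End BetheSolution.

Lemma card_box_partitions n k : #|{: Lam n k}| = 'C(n + k, n).
Proof.
rewrite card_sig -card_sorted_tuples.
have rev_inj : injective (@rev_tuple n 'I_k.+1).
  by move=> x y /(congr1 val) /(congr1 rev); rewrite !revK => /val_inj.
rewrite -(card_preimset _ rev_inj); apply: eq_card => x.
by rewrite !inE /lam_pred /= map_rev rev_sorted sorted_map.
Qed.

Lemma bethe_sol_inj n k (l l' : Lam n k) : l != l' -> bethe_sol l <> bethe_sol l'.
Proof.
move=> ne_ll' eq_sol; case/eqP: ne_ll'; apply/val_inj/eq_from_tnth => i.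
move: (congr1 (fun y => y (rev_ord i) 0%N) eq_sol); rewrite /= !bethe_sol_coef0.
move/(tvar_inj (idx_range _ _) (idx_range _ _)).
by rewrite /idx /Iidx rev_ordK => /addIn /val_inj.
Qed.

Theorem mainTheorem8 (n k : nat) :
  #|{: Lam n k}| = 'C(n + k, n) /\
  exists y : Lam n k -> 'I_n -> ps (RatFun (n + k)),
    (forall l (i : 'I_n) (m : nat), BAE_lhs (y l) i m = 0) /\
    (forall l l', l != l' -> y l <> y l') /\
    (forall l (p : 'I_n),
        y l p 0%N = tvar (n + k) (Iidx l p) /\
        y l p 1%N = first_coef l (Iidx l p)).
Proof.
split; first exact: card_box_partitions.
exists (@bethe_sol n k); split; first exact: bethe_sol_solves.
split; first exact: bethe_sol_inj.
by move=> l p; split; [exact: bethe_sol_coef0 | exact: bethe_sol_coef1].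
Qed.
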